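(* Let $d$ be a $\delta$-hyperbolic metric on a set containing distinct points $w,x,y,z$, let $(T,d_T)$ be the universal tree on $x,y,z$ with Steiner node $r$, and let $\pi$ be a permutation of $\{x,y,z\}$ such that $(\pi y,\pi z)_w=\max\big((x,y)_w,(y,z)_w,(x,z)_w\big)$ (so that $w$ is sorted into a zone of $\pi x$ and assigned the distance $d_T(w,r):=(\pi y,\pi z)_w$ to $r$). Then the resulting tree distances from $w$ to $\pi y$ and $\pi z$ through $r$ have additive distortion at most $\delta$: \[\big|(\pi y,\pi z)_w+d_T(r,\pi y)-d(w,\pi y)\big|\le\delta\quad\text{and}\quad\big|(\pi y,\pi z)_w+d_T(r,\pi z)-d(w,\pi z)\big|\le\delta.\]
   Context: The Gromov product is $(a,b)_c=\tfrac12\big(d(c,a)+d(c,b)-d(a,b)\big)$. A metric $d$ is $\delta$-hyperbolic if $(a,b)_c\ge\min\big((a,e)_c,(b,e)_c\big)-\delta$ for all points $a,b,c,e$. The universal tree on $x,y,z$ has nodes $x,y,z,r$ with $r$ adjacent to $x,y,z$ by edges of weights $d_T(x,r)=(y,z)_x$, $d_T(y,r)=(x,z)_y$, $d_T(z,r)=(x,y)_z$. *)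

From mathcomp Require Import all_boot all_order all_algebra.
Set Implicit Arguments. Unset Strict Implicit. Unset Printing Implicit Defensive.
Import Order.TTheory GRing.Theory Num.Theory.
Local Open Scope ring_scope.

Section Defs.
Variables (R : realFieldType) (T : eqType).

Definition is_metric (d : T -> T -> R) : Prop :=
  [/\ (forall a b, d a b = 0 <-> a = b),
      (forall a b, d a b = d b a) &
      (forall a b c, d a c <= d a b + d b c)].

Definition gromov (d : T -> T -> R) (a b c : T) : R :=
  (d c a + d c b - d a b) / 2.

Definition hyperbolic (d : T -> T -> R) (delta : R) : Prop :=
  forall a b c e : T,
    gromov d a b c >= Num.min (gromov d a e c) (gromov d b e c) - delta.

(* Universal tree on x,y,z with Steiner node r: weight of the edge from
   leaf v in {x,y,z} to r, i.e. d_T(v,r) = d_T(r,v). *)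
Definition tree_dist_r (d : T -> T -> R) (x y z v : T) : R :=
  if v == x then gromov d y z x
  else if v == y then gromov d x z y
  else gromov d x y z.
End Defs.

(** Write [(a, b, c)] for [(pi x, pi y, pi z)].  The leg [d_T(r, b)] is [(a,c)_b],
    and with it the distortion of the tree path from [w] through [r] to [b] is
    exactly [(a,c)_w - (a,b)_w].  Since [(b,c)_w] is the largest of the three
    Gromov products at [w], two applications of the four-point condition show
    that the two smaller ones differ by at most [delta].  The bound for [c] is
    the same argument with [b] and [c] exchanged. *)
From mathcomp Require Import all_boot all_order all_algebra.
From mathcomp Require Import lra.
Set Implicit Arguments. Unset Strict Implicit. Unset Printing Implicit Defensive.
Import Order.TTheory GRing.Theory Num.Theory.
Local Open Scope ring_scope.

Section UniversalTree.
Variables (R : realFieldType) (T : eqType) (d : T -> T -> R).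

(* For [v] in a three-point list [s] this is the leg [d_T(v, r)] of the
   universal tree on [s]; written as a symmetric function of [s], it is
   visibly invariant under permuting [s]. *)
Definition steiner_leg (s : seq T) (v : T) : R :=
  \sum_(u <- s) d v u - (\sum_(u <- s) \sum_(u' <- s) d u u') / 4.

Lemma steiner_leg_perm s1 s2 v :
  perm_eq s1 s2 -> steiner_leg s1 v = steiner_leg s2 v.
Proof.
move=> s12; rewrite /steiner_leg (perm_big s2 s12); congr (_ - _ / 4).
rewrite (perm_big s2 s12); apply: eq_bigr => u _; exact: perm_big.
Qed.

Hypothesis d_metric : is_metric d.

Lemma metricxx a : d a a = 0.
Proof. by case: d_metric => /(_ a a) [_ ->]. Qed.

Lemma metricC a b : d a b = d b a.
Proof. by case: d_metric. Qed.

Lemma gromovC a b c : gromov d a b c = gromov d b a c.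
Proof. by rewrite /gromov (addrC (d c a)) (metricC a b). Qed.

Lemma steiner_leg_head x y z : steiner_leg [:: x; y; z] x = gromov d y z x.
Proof.
rewrite /steiner_leg /gromov !big_cons !big_nil !metricxx.
have := metricC x y; have := metricC x z; have := metricC y z; lra.
Qed.

Lemma gromov_steiner a b c : gromov d a c b = steiner_leg [:: a; b; c] b.
Proof.
rewrite -steiner_leg_head; apply: steiner_leg_perm.
exact/permPl/(perm_catCA [:: b] [:: a] [:: c]).
Qed.

Lemma tree_dist_r_steiner x y z v :
  v \in [:: x; y; z] -> tree_dist_r d x y z v = steiner_leg [:: x; y; z] v.
Proof.
rewrite /tree_dist_r; case: ifP => [/eqP-> _|vx]; first by rewrite steiner_leg_head.
case: ifP => [/eqP-> _|vy]; first by rewrite gromov_steiner.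
rewrite !inE vx vy /= => /eqP->; rewrite -steiner_leg_head; apply: steiner_leg_perm.
exact/permPl/(perm_catC [:: z] [:: x; y]).
Qed.

Lemma tree_dist_r_perm x y z a b c :
  perm_eq [:: a; b; c] [:: x; y; z] -> tree_dist_r d x y z b = gromov d a c b.
Proof.
move=> abc; rewrite gromov_steiner (steiner_leg_perm _ abc) tree_dist_r_steiner //.
by rewrite -(perm_mem abc) !inE eqxx orbT.
Qed.

Lemma gromov_le_max3 w x y z u v :
  u \in [:: x; y; z] -> v \in [:: x; y; z] -> u != v ->
  gromov d u v w <=
    Num.max (gromov d x y w) (Num.max (gromov d y z w) (gromov d x z w)).
Proof.
rewrite !inE => /or3P[]/eqP-> /or3P[]/eqP->; rewrite ?eqxx // => _;
  by rewrite ?(gromovC y x) ?(gromovC z y) ?(gromovC z x) !le_max lexx ?orbT.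
Qed.

Lemma tree_leg_gromov w a b c :
  gromov d b c w + gromov d a c b - d w b = gromov d a c w - gromov d a b w.
Proof. by rewrite /gromov; have := metricC a b; lra. Qed.

Lemma hyperbolic_gromov_close delta w a b c : hyperbolic d delta ->
  gromov d a b w <= gromov d b c w -> gromov d a c w <= gromov d b c w ->
  `|gromov d a c w - gromov d a b w| <= delta.
Proof.
move=> hyp ab_le ac_le; have := hyp a c w b; have := hyp a b w c.
rewrite (gromovC c b) (min_idPl ab_le) (min_idPl ac_le) ler_distl; lra.
Qed.

Lemma tree_leg_distortion delta w a b c : hyperbolic d delta ->
  gromov d a b w <= gromov d b c w -> gromov d a c w <= gromov d b c w ->
  `|gromov d b c w + gromov d a c b - d w b| <= delta.
Proof. by rewrite tree_leg_gromov; apply: hyperbolic_gromov_close. Qed.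

End UniversalTree.

Theorem proposition1 (R : realFieldType) (T : eqType) (d : T -> T -> R)
    (delta : R) (w x y z px py pz : T) :
  is_metric d -> hyperbolic d delta ->
  uniq [:: w; x; y; z] ->
  perm_eq [:: px; py; pz] [:: x; y; z] ->
  gromov d py pz w =
    Num.max (gromov d x y w) (Num.max (gromov d y z w) (gromov d x z w)) ->
  `| gromov d py pz w + tree_dist_r d x y z py - d w py | <= delta /\
  `| gromov d py pz w + tree_dist_r d x y z pz - d w pz | <= delta.
Proof.
move=> d_metric hyp uniq_wxyz pxyz max_pyz.
have pxzy : perm_eq [:: px; pz; py] [:: x; y; z].
  by apply: perm_trans pxyz; rewrite perm_cons; exact/permPl/(perm_catC [:: pz]).
have in_xyz u : u \in [:: px; py; pz] -> u \in [:: x; y; z] by rewrite (perm_mem pxyz).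
have le_pyz u v : u \in [:: px; py; pz] -> v \in [:: px; py; pz] -> u != v ->
    gromov d u v w <= gromov d py pz w.
  by move=> /in_xyz u_in /in_xyz v_in uv; rewrite max_pyz gromov_le_max3.
have : uniq [:: px; py; pz] by rewrite (perm_uniq pxyz); case/andP: uniq_wxyz.
rewrite /= !inE negb_or => /andP[/andP[px_py px_pz] _].
rewrite (tree_dist_r_perm d_metric pxyz) (tree_dist_r_perm d_metric pxzy).
split; first by apply: tree_leg_distortion => //; apply: le_pyz; rewrite ?inE ?eqxx ?orbT.
rewrite (gromovC d_metric py pz).
by apply: tree_leg_distortion => //; rewrite -(gromovC d_metric py pz);
  apply: le_pyz; rewrite ?inE ?eqxx ?orbT.
Qed.
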